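(* Let $S$ be a finitely generated cancellative semigroup which cannot be embedded in a group. Then $|\Omega S|=2^{\aleph_0}$.
   Context: $S$ is cancellative if both $ax=ay\Rightarrow x=y$ and $xa=ya\Rightarrow x=y$ for all $a,x,y\in S$. A digraph on $\Omega$ is a subset $\Gamma\subseteq\Omega\times\Omega$. A path is a sequence of pairwise distinct vertices $(v_0,v_1,\ldots)$ with $(v_i,v_{i+1})\in\Gamma$ (length 0 allowed); a ray is an infinite path; an anti-ray is an infinite sequence of distinct vertices with $(v_{i+1},v_i)\in\Gamma$. For infinite $\Sigma',\Sigma\subseteq\Omega$, $\Sigma'\preccurlyeq\Sigma$ means there are infinitely many pairwise vertex-disjoint paths from vertices of $\Sigma'$ to vertices of $\Sigma$. On rays and anti-rays $\preccurlyeq$ is a preorder with associated equivalence $\approx$; the ends are the $\approx$-classes of rays and anti-rays, and $\Omega\Gamma$ is the poset of ends. The right Cayley graph $\Gamma_r(S,A)$ has vertex set $S$ and edges $(x,xa)$, $x\in S$, $a\in A$. For finitely generated $S$, $\Omega S:=\Omega\Gamma_r(S,A)$ for any finite generating set $A$ (well defined up to isomorphism). *)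

From Stdlib Require Import List.
Import ListNotations.
Set Implicit Arguments.

Section Defs.
Variable T : Type.

Definition associative (op : T -> T -> T) : Prop :=
  forall x y z, op x (op y z) = op (op x y) z.

Definition cancellative (op : T -> T -> T) : Prop :=
  (forall a x y, op a x = op a y -> x = y) /\
  (forall a x y, op x a = op y a -> x = y).

Inductive generated (op : T -> T -> T) (A : list T) : T -> Prop :=
| gen_base : forall a, In a A -> generated op A a
| gen_op : forall x y, generated op A x -> generated op A y -> generated op A (op x y).

Definition generates (op : T -> T -> T) (A : list T) : Prop :=
  forall x, generated op A x.

Definition finitely_generated (op : T -> T -> T) : Prop :=
  exists A : list T, generates op A.

Fixpoint chain (edge : T -> T -> Prop) (p : list T) : Prop :=
  match p with
  | x :: ((y :: _) as q) => edge x y /\ chain edge q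
  | _ => True
  end.

Definition is_path (edge : T -> T -> Prop) (p : list T) : Prop :=
  p <> [] /\ NoDup p /\ chain edge p.

Definition path_from_to (edge : T -> T -> Prop) (X Y : T -> Prop) (p : list T) : Prop :=
  is_path edge p /\
  match p with
  | [] => False
  | x :: _ => X x /\ Y (last p x)
  end.

Definition preceq (edge : T -> T -> Prop) (X Y : T -> Prop) : Prop :=
  exists P : nat -> list T,
    (forall n, path_from_to edge X Y (P n)) /\
    (forall m n, m <> n -> forall v, In v (P m) -> In v (P n) -> False).

Definition injective_seq (f : nat -> T) : Prop :=
  forall i j, f i = f j -> i = j.

Definition is_ray (edge : T -> T -> Prop) (f : nat -> T) : Prop :=
  injective_seq f /\ forall i, edge (f i) (f (Datatypes.S i)).

Definition is_anti_ray (edge : T -> T -> Prop) (f : nat -> T) : Prop :=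
  injective_seq f /\ forall i, edge (f (Datatypes.S i)) (f i).

Definition ray_or_antiray (edge : T -> T -> Prop) (r : bool * (nat -> T)) : Prop :=
  if fst r then is_ray edge (snd r) else is_anti_ray edge (snd r).

Definition image (f : nat -> T) : T -> Prop := fun v => exists i, f i = v.

Definition end_equiv (edge : T -> T -> Prop) (r r' : bool * (nat -> T)) : Prop :=
  preceq edge (image (snd r)) (image (snd r')) /\
  preceq edge (image (snd r')) (image (snd r)).

(* |Ω Γ| = 2^aleph_0 : the ≈-classes of rays and anti-rays are in bijection
   with the Cantor space nat -> bool (F induces a bijection on the quotient). *)
Definition ends_card_continuum (edge : T -> T -> Prop) : Prop :=
  exists F : bool * (nat -> T) -> (nat -> bool),
    (forall c : nat -> bool, exists r, ray_or_antiray edge r /\ F r = c) /\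
    (forall r r', ray_or_antiray edge r -> ray_or_antiray edge r' ->
        (F r = F r' <-> end_equiv edge r r')).

Definition cayley_edge (op : T -> T -> T) (A : list T) (x y : T) : Prop :=
  exists a, In a A /\ y = op x a.

End Defs.

Definition is_group (G : Type) (m : G -> G -> G) (e : G) (i : G -> G) : Prop :=
  associative m /\ (forall x, m e x = x /\ m x e = x) /\
  (forall x, m (i x) x = e /\ m x (i x) = e).

Definition embeds_in_group (S : Type) (op : S -> S -> S) : Prop :=
  exists (G : Type) (m : G -> G -> G) (e : G) (i : G -> G),
    is_group m e i /\
    exists phi : S -> G,
      (forall x y, phi x = phi y -> x = y) /\
      (forall x y, phi (op x y) = m (phi x) (phi y)).

(* By Ore's theorem, a cancellative semigroup [S] that does not embed in a group has
   elements [a], [b] with [a S] and [b S] disjoint.  The words spelling [a b] and [b a]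
   have equal length, so every [c : nat -> bool] determines a walk that reads, block after
   block, the word of [a b] or [b a] as [c k] is [true] or [false].  Cancellation and the
   disjointness of the cones forbid a return to a vertex [x] from a cone [x t a b s], so
   every vertex is visited finitely often and the walk contains a ray.  Right
   multiplication preserves cones, and once [c] and [c'] differ, the two rays lie in
   disjoint cones [w a b S] and [w b a S] apart from finitely many vertices: no path
   avoiding these joins them, so the [2^aleph_0] rays lie in distinct ends.  Since [S]
   is countable there are at most [2^aleph_0] rays and anti-rays, and
   Schroeder-Bernstein yields the bijection. *)

From Stdlib Require Import List Arith Lia Classical ClassicalEpsilon FunctionalExtensionality.
From Stdlib Require Import PropExtensionality ProofIrrelevance FinFun Cantor.
Import ListNotations.
Set Implicit Arguments.

Lemma exists_max (P : nat -> Prop) n B :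
  P n -> (forall m, P m -> m < B) -> exists m, P m /\ forall m', P m' -> m' <= m.
Proof.
  revert n; induction B as [|B IH]; intros n Hn HB; [specialize (HB n Hn); lia|].
  destruct (classic (P B)) as [HPB|HPB].
  - exists B; split; [exact HPB|intros m' Hm'; specialize (HB m' Hm'); lia].
  - apply (IH n Hn); intros m Hm; specialize (HB m Hm).
    destruct (Nat.eq_dec m B) as [->|]; [contradiction|lia].
Qed.

(** * Walks and the preorder on rays *)

Section Walks.
Variables (T : Type) (e : T -> T -> Prop).

Lemma last_cons_default (x : T) l d d' : last (x :: l) d = last (x :: l) d'.
Proof.
  revert x; induction l as [|y l IH]; intro x; [reflexivity|].
  exact (IH y).
Qed.

Lemma last_app_cons (l1 : list T) x l2 d : last (l1 ++ x :: l2) d = last (x :: l2) d.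
Proof.
  induction l1 as [|y l1 IH]; [reflexivity|].
  rewrite <- IH; destruct l1; reflexivity.
Qed.

Lemma last_In (x : T) l : In (last (x :: l) x) (x :: l).
Proof.
  revert x; induction l as [|y l IH]; intro x; [now left|].
  change (In (last (y :: l) x) (x :: y :: l)).
  right; rewrite (last_cons_default y l x y); apply IH.
Qed.

Lemma chain_app_inv_r (R : T -> T -> Prop) l1 l2 : chain R (l1 ++ l2) -> chain R l2.
Proof.
  induction l1 as [|x l1 IH]; [trivial|].
  simpl; intro H; apply IH; destruct (l1 ++ l2); [exact I|apply H].
Qed.

Definition walk (x : T) (l : list T) (y : T) : Prop :=
  chain e (x :: l) /\ last (x :: l) x = y.

Lemma walk_nil x : walk x [] x.
Proof. split; [exact I|reflexivity]. Qed.

Lemma walk_cons x z l y : e x z -> walk z l y -> walk x (z :: l) y.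
Proof.
  intros Hxz [Hc Hl]; split; [now split|].
  rewrite <- Hl; exact (last_cons_default z l x z).
Qed.

Lemma walk_uncons x z l y : walk x (z :: l) y -> e x z /\ walk z l y.
Proof.
  intros [[Hxz Hc] Hl]; repeat split; trivial.
  rewrite <- Hl; exact (last_cons_default z l z x).
Qed.

Lemma walk_last_In x l y : walk x l y -> In y (x :: l).
Proof. intros [_ <-]; apply last_In. Qed.

Lemma walk_app x l1 y l2 z : walk x l1 y -> walk y l2 z -> walk x (l1 ++ l2) z.
Proof.
  revert x; induction l1 as [|w l1 IH]; intros x H1 H2.
  - destruct H1 as [_ <-]; exact H2.
  - apply walk_uncons in H1 as [Hxw H1]; apply walk_cons; auto.
Qed.

Lemma walk_suffix x l1 y l2 z : walk x (l1 ++ y :: l2) z -> walk y l2 z.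
Proof.
  intros [Hc Hl]; split.
  - exact (chain_app_inv_r _ (x :: l1) (y :: l2) Hc).
  - rewrite <- Hl, (last_cons_default y l2 y x).
    exact (eq_sym (last_app_cons (x :: l1) y l2 x)).
Qed.

Lemma walk_erase_loops x l y : walk x l y ->
  exists p, walk x p y /\ NoDup (x :: p) /\ incl p l.
Proof.
  revert x; induction l as [|z l IH]; intros x Hw.
  - exists []; split; [exact Hw|split; [repeat constructor; intros []|intros v []]].
  - apply walk_uncons in Hw as [Hxz Hw].
    destruct (IH z Hw) as [p [Hp [Hnd Hincl]]].
    destruct (classic (In x (z :: p))) as [Hin|Hnin].
    + destruct (in_split _ _ Hin) as [l1 [l2 E]].
      exists l2; split; [|split].
      * destruct l1 as [|z' l1]; injection E as Hz E; subst; [exact Hp|].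
        eapply walk_suffix; exact Hp.
      * rewrite E in Hnd; exact (NoDup_app_remove_l _ _ Hnd).
      * intros v Hv.
        assert (Hv' : In v (z :: p)) by (rewrite E; apply in_or_app; right; now right).
        destruct Hv' as [<-|Hv']; [now left|right; apply Hincl, Hv'].
    + exists (z :: p); split; [now apply walk_cons|split].
      * now constructor.
      * intros v [<-|Hv]; [now left|right; apply Hincl, Hv].
Qed.

Lemma path_from_to_inv (X Y : T -> Prop) p : path_from_to e X Y p ->
  exists x l y, p = x :: l /\ X x /\ Y y /\ walk x l y /\ NoDup p.
Proof.
  intros [[_ [Hnd Hc]] Hends]; destruct p as [|x l]; [contradiction|].
  destruct Hends as [HX HY]; exists x, l, (last (x :: l) x); repeat split; trivial.
Qed.

Lemma path_from_to_of_walk (X Y : T -> Prop) x l y : X x -> Y y -> walk x l y ->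
  NoDup (x :: l) -> path_from_to e X Y (x :: l).
Proof.
  intros HX HY [Hc Hl] Hnd; split; [split; [discriminate|now split]|].
  split; [exact HX|rewrite Hl; exact HY].
Qed.

Lemma path_of_walk_avoiding (X Y : T -> Prop) (L : list T) x l y :
  X x -> Y y -> walk x l y -> (forall v, In v (x :: l) -> ~ In v L) ->
  exists p, path_from_to e X Y p /\ forall v, In v p -> ~ In v L.
Proof.
  intros HX HY Hw Hav; destruct (walk_erase_loops Hw) as [p [Hp [Hnd Hincl]]].
  exists (x :: p); split; [exact (path_from_to_of_walk X Y HX HY Hp Hnd)|].
  intros v [<-|Hv]; apply Hav; [now left|right; apply Hincl, Hv].
Qed.
End Walks.

Section Reversal.
Variables (T : Type) (e : T -> T -> Prop).

Lemma walk_rev x l y : walk e x l y ->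
  exists l', rev (x :: l) = y :: l' /\ walk (fun u v => e v u) y l' x.
Proof.
  revert x; induction l as [|z l IH]; intros x Hw.
  - destruct Hw as [_ <-]; exists []; split; [reflexivity|apply walk_nil].
  - apply walk_uncons in Hw as [Hxz Hw].
    destruct (IH z Hw) as [l' [Hrev Hw']].
    exists (l' ++ [x]); split.
    + change (rev (z :: l) ++ [x] = y :: l' ++ [x]); rewrite Hrev; reflexivity.
    + apply walk_app with z; [exact Hw'|].
      exact (walk_cons _ Hxz (walk_nil _ x)).
Qed.

Lemma path_from_to_rev (X Y : T -> Prop) p :
  path_from_to e X Y p -> path_from_to (fun u v => e v u) Y X (rev p).
Proof.
  intro Hp; destruct (path_from_to_inv Hp) as [x [l [y [-> [HX [HY [Hw Hnd]]]]]]].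
  destruct (walk_rev Hw) as [l' [Hrev Hw']].
  apply NoDup_rev in Hnd; rewrite Hrev in Hnd |- *.
  exact (path_from_to_of_walk Y X HY HX Hw' Hnd).
Qed.

Lemma preceq_rev (X Y : T -> Prop) :
  preceq e X Y -> preceq (fun u v => e v u) Y X.
Proof.
  intros [P [HP Hdisj]]; exists (fun n => rev (P n)); split.
  - intro n; apply path_from_to_rev, HP.
  - intros m n Hmn v Hm Hn; rewrite <- in_rev in Hm, Hn; exact (Hdisj m n Hmn v Hm Hn).
Qed.

End Reversal.

Section Preceq.
Variables (T : Type) (e : T -> T -> Prop).

Definition disjoint_paths (P : nat -> list T) : Prop :=
  forall m n, m <> n -> forall v, In v (P m) -> In v (P n) -> False.

Lemma disjoint_paths_avoid P : disjoint_paths P ->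
  forall L, exists n, forall v, In v (P n) -> ~ In v L.
Proof.
  intros Hdisj L; apply NNPP; intro Hno.
  assert (Hhit : forall n, exists v, In v (P n) /\ In v L).
  { intro n; apply NNPP; intro Hn; apply Hno; exists n; intros v Hv HvL; apply Hn; eauto. }
  destruct (choice _ Hhit) as [g Hg].
  assert (Hnd : NoDup (map g (seq 0 (S (length L))))).
  { apply Injective_map_NoDup; [|apply seq_NoDup].
    intros m n E; apply NNPP; intro Hmn.
    apply (Hdisj m n Hmn (g m)); [apply Hg|rewrite E; apply Hg]. }
  assert (Hincl : incl (map g (seq 0 (S (length L)))) L).
  { intros v Hv; apply in_map_iff in Hv as [n [<- _]]; apply Hg. }
  apply NoDup_incl_length in Hincl; [|exact Hnd].
  rewrite length_map, length_seq in Hincl; lia.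
Qed.

Lemma preceq_of_avoiding (X Y : T -> Prop) :
  (forall L, exists p, path_from_to e X Y p /\ forall v, In v p -> ~ In v L) ->
  preceq e X Y.
Proof.
  intro H; destruct (choice _ H) as [f Hf].
  (* [acc n] collects the vertices of the first [n] paths, which the next path avoids *)
  set (acc := fix acc n := match n with 0 => [] | S n => acc n ++ f (acc n) end).
  assert (Hacc : forall m n, m < n -> incl (f (acc m)) (acc n)).
  { intros m n; induction n as [|n IH]; intros Hmn v Hv; [lia|].
    simpl; apply in_or_app.
    destruct (Nat.eq_dec m n) as [->|Hne]; [now right|left; apply IH; [lia|exact Hv]]. }
  exists (fun n => f (acc n)); split; [intro n; apply Hf|].
  intros m n Hmn v Hm Hn.
  destruct (Nat.lt_gt_cases m n) as [[Hlt|Hlt] _]; [exact Hmn| |].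
  - exact (proj2 (Hf (acc n)) v Hn (Hacc m n Hlt v Hm)).
  - exact (proj2 (Hf (acc m)) v Hm (Hacc n m Hlt v Hn)).
Qed.

Lemma injective_seq_eventually_avoids (y : nat -> T) : injective_seq y ->
  forall L, exists K, forall k, K <= k -> ~ In (y k) L.
Proof.
  intros Hy L; induction L as [|v L [K IH]]; [exists 0; intros k _ []|].
  destruct (classic (exists i, y i = v)) as [[i Hi]|Hn].
  - exists (max K (S i)); intros k Hk [E|E]; [|apply (IH k); [lia|exact E]].
    subst; apply Hy in E; lia.
  - exists K; intros k Hk [E|E]; [apply Hn; eauto|exact (IH k Hk E)].
Qed.

Lemma disjoint_paths_avoid_late (P : nat -> list T) (y : nat -> T) : disjoint_paths P ->
  forall L K, exists n, (forall v, In v (P n) -> ~ In v L) /\ forall j, In (y j) (P n) -> K <= j.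
Proof.
  intros Hdisj L K; destruct (disjoint_paths_avoid Hdisj (L ++ map y (seq 0 K))) as [n Hn].
  exists n; split.
  - intros v Hv HvL; apply (Hn v Hv), in_or_app; now left.
  - intros j Hj; apply Nat.nlt_ge; intro Hjk; apply (Hn _ Hj), in_or_app; right.
    apply in_map, in_seq; lia.
Qed.

Lemma ray_segment (y : nat -> T) j n : (forall i, e (y i) (y (S i))) ->
  walk e (y j) (map y (seq (S j) n)) (y (j + n)).
Proof.
  intro Hy; revert j; induction n as [|n IH]; intro j.
  - rewrite Nat.add_0_r; apply walk_nil.
  - apply walk_cons; [apply Hy|].
    replace (j + S n) with (S j + n) by lia; apply IH.
Qed.

Lemma preceq_trans_ray (X Z : T -> Prop) (y : nat -> T) : is_ray e y ->
  preceq e X (image y) -> preceq e (image y) Z -> preceq e X Z.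
Proof.
  intros [Hinj Hy] [P [HP HPd]] [Q [HQ HQd]]; apply preceq_of_avoiding; intro L.
  destruct (injective_seq_eventually_avoids Hinj L) as [K HK].
  destruct (disjoint_paths_avoid_late y HPd L K) as [n [HnL HnK]].
  destruct (path_from_to_inv (HP n)) as [x [p [v [EP [HX [[j <-] [Hp _]]]]]]].
  assert (Hj : K <= j) by (apply HnK; rewrite EP; exact (walk_last_In Hp)).
  destruct (disjoint_paths_avoid_late y HQd L (S j)) as [m [HmL HmK]].
  destruct (path_from_to_inv (HQ m)) as [z [q [w [EQ [[j' <-] [HZ [Hq _]]]]]]].
  assert (Hj' : S j <= j') by (apply HmK; rewrite EQ; now left).
  assert (Hseg := ray_segment y j (j' - j) Hy).
  replace (j + (j' - j)) with j' in Hseg by lia.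
  apply (path_of_walk_avoiding X Z L HX HZ (walk_app Hp (walk_app Hseg Hq))).
  intros u Hu; rewrite app_comm_cons in Hu; apply in_app_or in Hu as [Hu|Hu].
  - rewrite <- EP in Hu; exact (HnL u Hu).
  - apply in_app_or in Hu as [Hu|Hu].
    + apply in_map_iff in Hu as [k [<- Hk]]; apply in_seq in Hk; apply HK; lia.
    + apply HmL; rewrite EQ; now right.
Qed.

Lemma preceq_refl_image (y : nat -> T) : injective_seq y -> preceq e (image y) (image y).
Proof.
  intro Hy; exists (fun n => [y n]); split.
  - intro n; apply (path_from_to_of_walk (image y) (image y) (ex_intro _ n eq_refl)
      (ex_intro _ n eq_refl) (walk_nil e (y n))); repeat constructor; intros [].
  - intros m n Hmn v [Hm|[]] [Hn|[]]; apply Hmn, Hy; congruence.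
Qed.

Lemma ray_of_walk (w : nat -> T) : (forall n, e (w n) (w (S n))) ->
  (forall n, exists B, forall m, w m = w n -> m < B) ->
  exists r, is_ray e r /\ forall k, exists n, r k = w n.
Proof.
  intros Hw Hfin.
  assert (Hlast : forall n, exists m, w m = w n /\ forall m', w m' = w n -> m' <= m).
  { intro n; destruct (Hfin n) as [B HB]; exact (exists_max (fun m => w m = w n) n eq_refl HB). }
  destruct (choice _ Hlast) as [last_visit Hlv].
  (* the ray follows the walk from one last visit to the next *)
  set (idx := fix idx k := match k with 0 => last_visit 0 | S k => last_visit (S (idx k)) end).
  assert (Hstep : forall k, idx k < idx (S k)) by (intro k; apply (proj2 (Hlv _)); reflexivity).
  assert (Hmono : forall i j, i < j -> idx i < idx j).
  { intros i j; induction j as [|j IH]; intro Hij; [lia|].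
    specialize (Hstep j); destruct (Nat.eq_dec i j) as [->|]; [exact Hstep|].
    specialize (IH ltac:(lia)); lia. }
  assert (Hmax : forall k m, w m = w (idx k) -> m <= idx k).
  { intros [|k] m; [destruct (Hlv 0) as [E H]|destruct (Hlv (S (idx k))) as [E H]];
      simpl; rewrite E; apply H. }
  exists (fun k => w (idx k)); split; [split|].
  - intros i j E; destruct (lt_eq_lt_dec i j) as [[H|H]|H]; [|exact H|]; exfalso.
    + specialize (Hmono i j H); specialize (Hmax i (idx j) (eq_sym E)); lia.
    + specialize (Hmono j i H); specialize (Hmax j (idx i) E); lia.
  - intro k; simpl; rewrite (proj1 (Hlv _)); apply Hw.
  - intro k; exists (idx k); reflexivity.
Qed.
End Preceq.

Lemma preceq_trans_anti_ray (T : Type) (e : T -> T -> Prop) (X Z : T -> Prop) (y : nat -> T) :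
  is_anti_ray e y -> preceq e X (image y) -> preceq e (image y) Z -> preceq e X Z.
Proof.
  intros Hy HXy HyZ.
  exact (preceq_rev
           (preceq_trans_ray (e := fun u v => e v u) Hy (preceq_rev HyZ) (preceq_rev HXy))).
Qed.

(** * Counting ends *)

Section SchroederBernstein.
Variables (X Y : Type) (f : X -> Y) (g : Y -> X).
Hypothesis f_inj : forall a b, f a = f b -> a = b.
Hypothesis g_inj : forall a b, g a = g b -> a = b.

(* [x] lies on a [g \o f]-orbit starting outside the range of [g]; there [h] is [f],
   elsewhere [h] is the inverse of [g]. *)
Let orbit_of_unreached (x : X) : Prop :=
  exists n x0, (forall y, g y <> x0) /\ x = Nat.iter n (fun z => g (f z)) x0.

Let orbit_step x : orbit_of_unreached x -> orbit_of_unreached (g (f x)).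
Proof. intros [n [x0 [H0 ->]]]; exists (S n), x0; split; trivial. Qed.

Theorem schroeder_bernstein :
  exists h : X -> Y, (forall a b, h a = h b -> a = b) /\ forall y, exists x, h x = y.
Proof.
  assert (Hh : forall x, exists y, (orbit_of_unreached x -> y = f x) /\
                              (~ orbit_of_unreached x -> g y = x)).
  { intro x; destruct (classic (orbit_of_unreached x)) as [Hx|Hx]; [exists (f x); tauto|].
    assert (Hy : exists y, g y = x).
    { apply NNPP; intro Hy; apply Hx; exists 0, x; split; [|reflexivity].
      intros y E; apply Hy; eauto. }
    destruct Hy as [y Hy]; exists y; tauto. }
  destruct (choice _ Hh) as [h Hspec]; exists h; split.
  - intros a b E.
    destruct (classic (orbit_of_unreached a)) as [Ha|Ha],
             (classic (orbit_of_unreached b)) as [Hb|Hb].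
    + apply f_inj; rewrite <- (proj1 (Hspec a) Ha), <- (proj1 (Hspec b) Hb); exact E.
    + exfalso; apply Hb; rewrite <- (proj2 (Hspec b) Hb), <- E, (proj1 (Hspec a) Ha).
      apply orbit_step, Ha.
    + exfalso; apply Ha; rewrite <- (proj2 (Hspec a) Ha), E, (proj1 (Hspec b) Hb).
      apply orbit_step, Hb.
    + rewrite <- (proj2 (Hspec a) Ha), <- (proj2 (Hspec b) Hb), E; reflexivity.
  - intro y; destruct (classic (orbit_of_unreached (g y))) as [Hgy|Hgy].
    + destruct Hgy as [[|n] [x0 [H0 Hn]]]; [exfalso; exact (H0 y Hn)|].
      set (x := Nat.iter n (fun z => g (f z)) x0).
      assert (Hy : y = f x) by (apply g_inj; exact Hn).
      exists x; rewrite Hy; apply (proj1 (Hspec x)); exists n, x0; split; trivial.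
    + exists (g y); apply g_inj, (proj2 (Hspec _) Hgy).
Qed.
End SchroederBernstein.

Section ClassesCardContinuum.
Variables (V : Type) (valid : V -> Prop) (equiv : V -> V -> Prop).
Hypothesis equiv_refl : forall r, valid r -> equiv r r.
Hypothesis equiv_sym : forall r r', equiv r r' -> equiv r' r.
Hypothesis equiv_trans : forall r1 r2 r3, valid r2 -> equiv r1 r2 -> equiv r2 r3 -> equiv r1 r3.

Let class (r : V) : V -> Prop := fun r' => valid r' /\ equiv r r'.

Let class_eq_iff r r' : valid r -> valid r' -> class r = class r' <-> equiv r r'.
Proof.
  intros Hr Hr'; split.
  - intro E; assert (H : class r' r') by (split; auto); rewrite <- E in H; apply H.
  - intro H; apply functional_extensionality; intro q.
    apply propositional_extensionality; split; intros [Hq Hq']; split; eauto.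
Qed.

Let classes := {P : V -> Prop | exists r, valid r /\ P = class r}.

Let classes_eq (q q' : classes) : proj1_sig q = proj1_sig q' -> q = q'.
Proof.
  destruct q as [q pq], q' as [q' pq']; simpl; intros ->.
  f_equal; apply proof_irrelevance.
Qed.

Theorem classes_card_continuum (enc : V -> nat -> bool) (emb : (nat -> bool) -> V) :
  (forall r r', enc r = enc r' -> r = r') ->
  (forall c, valid (emb c)) ->
  (forall c c', equiv (emb c) (emb c') -> c = c') ->
  exists F : V -> nat -> bool,
    (forall c, exists r, valid r /\ F r = c) /\
    (forall r r', valid r -> valid r' -> (F r = F r' <-> equiv r r')).
Proof.
  intros enc_inj emb_valid emb_inj.
  destruct (choice (fun (q : classes) r => valid r /\ proj1_sig q = class r)
                   (fun q => proj2_sig q)) as [rep Hrep].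
  assert (Hcode : forall q q' : classes, enc (rep q) = enc (rep q') -> q = q').
  { intros q q' E; apply enc_inj in E; apply classes_eq.
    rewrite (proj2 (Hrep q)), (proj2 (Hrep q')), E; reflexivity. }
  set (class_of_seq := fun c =>
         exist _ (class (emb c)) (ex_intro _ (emb c) (conj (emb_valid c) eq_refl)) : classes).
  assert (Hseq : forall c c', class_of_seq c = class_of_seq c' -> c = c').
  { intros c c' E; apply (f_equal (@proj1_sig _ _)) in E.
    apply emb_inj, class_eq_iff; auto. }
  destruct (schroeder_bernstein _ _ Hcode Hseq) as [h [h_inj h_surj]].
  assert (HF : forall r, exists c, forall q : classes, valid r -> proj1_sig q = class r -> c = h q).
  { intro r; destruct (classic (valid r)) as [Hr|Hr]; [|exists (fun _ => false); tauto].
    exists (h (exist _ (class r) (ex_intro _ r (conj Hr eq_refl)))).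
    intros q _ Eq; f_equal; apply classes_eq; simpl; auto. }
  destruct (choice _ HF) as [F HFh]; exists F; split.
  - intro c; destruct (h_surj c) as [q <-].
    destruct (proj2_sig q) as [r [Hr Eq]]; exists r; split; [exact Hr|].
    exact (HFh r q Hr Eq).
  - intros r r' Hr Hr'.
    set (q := exist _ (class r) (ex_intro _ r (conj Hr eq_refl)) : classes).
    set (q' := exist _ (class r') (ex_intro _ r' (conj Hr' eq_refl)) : classes).
    rewrite (HFh r q Hr eq_refl), (HFh r' q' Hr' eq_refl), <- class_eq_iff by assumption.
    split; [intro E; apply h_inj in E; exact (f_equal (@proj1_sig _ _) E)|].
    intro E; f_equal; apply classes_eq; exact E.
Qed.
End ClassesCardContinuum.

Lemma seq_encoding (T : Type) (code : T -> nat) : (forall x y, code x = code y -> x = y) ->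
  exists enc : bool * (nat -> T) -> nat -> bool, forall r r', enc r = enc r' -> r = r'.
Proof.
  intro Hcode.
  (* bit [1 + (n, m)] of the encoding records whether the [n]-th vertex has code [m] *)
  exists (fun r k => match k with
                     | 0 => fst r
                     | S k => let (n, m) := of_nat k in Nat.eqb (code (snd r n)) m
                     end).
  intros [b f] [b' f'] H.
  assert (Hb : b = b') by exact (f_equal (fun F => F 0) H); subst b'.
  f_equal; apply functional_extensionality; intro n.
  apply (f_equal (fun F => F (S (to_nat (n, code (f n)))))) in H.
  cbn beta iota in H; rewrite cancel_of_to, Nat.eqb_refl in H.
  symmetry in H; apply Nat.eqb_eq, Hcode in H; exact (eq_sym H).
Qed.

Section EndsOfRays.
Variables (T : Type) (e : T -> T -> Prop).

Lemma ray_or_antiray_injective r : ray_or_antiray e r -> injective_seq (snd r).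
Proof. unfold ray_or_antiray; destruct (fst r); intros [H _]; exact H. Qed.

Lemma preceq_trans_ray_or_antiray (X Z : T -> Prop) r : ray_or_antiray e r ->
  preceq e X (image (snd r)) -> preceq e (image (snd r)) Z -> preceq e X Z.
Proof.
  unfold ray_or_antiray; destruct (fst r); [apply preceq_trans_ray|apply preceq_trans_anti_ray].
Qed.

Theorem ends_card_continuum_of_rays (code : T -> nat) (ray : (nat -> bool) -> nat -> T) :
  (forall x y, code x = code y -> x = y) ->
  (forall c, is_ray e (ray c)) ->
  (forall c c', c <> c' -> ~ preceq e (image (ray c)) (image (ray c'))) ->
  ends_card_continuum e.
Proof.
  intros Hcode Hray Hsep.
  destruct (seq_encoding code Hcode) as [enc Henc].
  refine (classes_card_continuum (ray_or_antiray e) (end_equiv e) _ _ _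
            enc (fun c => (true, ray c)) Henc Hray _).
  - intros r Hr; split; apply preceq_refl_image, ray_or_antiray_injective, Hr.
  - intros r r' [H H']; split; assumption.
  - intros r1 r2 r3 Hr2 [H12 H21] [H23 H32]; split;
      eapply preceq_trans_ray_or_antiray; eassumption.
  - intros c c' [H _]; apply NNPP; intro Hne; exact (Hsep c c' Hne H).
Qed.
End EndsOfRays.

(** * Cancellative semigroups *)

Fixpoint nat_list_code (l : list nat) : nat :=
  match l with [] => 0 | a :: l => S (to_nat (a, nat_list_code l)) end.

Lemma nat_list_code_inj l l' : nat_list_code l = nat_list_code l' -> l = l'.
Proof.
  revert l'; induction l as [|a l IH]; intros [|a' l'] E; try discriminate; [reflexivity|].
  change (S (to_nat (a, nat_list_code l)) = S (to_nat (a', nat_list_code l'))) in E.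
  apply Nat.succ_inj, to_nat_inj in E; injection E as -> E; f_equal; auto.
Qed.

Lemma alphabet_code (X : Type) (A : list X) :
  exists code : list X -> nat, forall w w', incl w A -> incl w' A -> code w = code w' -> w = w'.
Proof.
  assert (Hidx : forall a, exists i, In a A -> nth_error A i = Some a).
  { intro a; destruct (classic (In a A)) as [Ha|Ha]; [|exists 0; tauto].
    destruct (In_nth_error _ _ Ha) as [i Hi]; exists i; auto. }
  destruct (choice _ Hidx) as [idx Hidx']; exists (fun w => nat_list_code (map idx w)).
  intros w w' Hw Hw' E; apply nat_list_code_inj in E.
  revert w' Hw' E; induction w as [|a w IH]; intros [|a' w'] Hw' E; try discriminate.
  { reflexivity. }
  injection E as Ea E; f_equal.
  - apply (f_equal (nth_error A)) in Ea.
    rewrite (Hidx' a), (Hidx' a') in Ea by first [apply Hw; now left|apply Hw'; now left].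
    congruence.
  - apply IH; [intros v Hv; apply Hw; now right|intros v Hv; apply Hw'; now right|exact E].
Qed.

Section Words.
Variables (M : Type) (op : M -> M -> M) (A : list M).
Hypothesis op_assoc : associative op.

Lemma generated_word x : generated op A x ->
  exists w, w <> [] /\ incl w A /\ forall y, fold_left op w y = op y x.
Proof.
  induction 1 as [a Ha|x x' _ [w [Hw [HwA Hx]]] _ [w' [_ [HwA' Hx']]]].
  - exists [a]; repeat split; [discriminate|intros v [<-|[]]; exact Ha].
  - exists (w ++ w'); split; [|split].
    + intro E; apply app_eq_nil in E; tauto.
    + intros v Hv; apply in_app_or in Hv as [Hv|Hv]; auto.
    + intro y; rewrite fold_left_app, Hx, Hx', op_assoc; reflexivity.
Qed.

Lemma generated_countable : (forall a x y, op a x = op a y -> x = y) -> generates op A ->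
  exists code : M -> nat, forall x y, code x = code y -> x = y.
Proof.
  intros lcancel HA; destruct (alphabet_code A) as [wcode Hwcode].
  destruct (choice _ (fun x => generated_word (HA x))) as [word Hword].
  exists (fun x => wcode (word x)); intros x y E.
  apply Hwcode in E; [|apply Hword..].
  apply (lcancel x); rewrite <- (proj2 (proj2 (Hword x)) x), <- (proj2 (proj2 (Hword y)) x), E.
  reflexivity.
Qed.
End Words.

Section Cancellative.
Variables (M : Type) (op : M -> M -> M).
Hypothesis op_assoc : associative op.
Hypothesis op_cancel : cancellative op.

(* If [x (t X s) = x] then [t X s] is an identity, so [X] has a right inverse and
   [X M] is everything. *)
Lemma disjoint_cones_no_return (X Y : M) : (forall s t, op X s <> op Y t) ->
  forall x t s, op x (op (op t X) s) <> x.
Proof.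
  destruct op_cancel as [lc rc]; intros HXY x t s Hx; set (y := op (op t X) s) in *.
  assert (Hl : forall z, op y z = z) by (intro z; apply (lc x); rewrite op_assoc, Hx; reflexivity).
  assert (Hr : forall z, op z y = z)
    by (intro z; apply (rc y); rewrite <- op_assoc, Hl; reflexivity).
  assert (HXst : op (op X s) t = y).
  { apply (lc t); rewrite Hr, !op_assoc; exact (Hl t). }
  apply (HXY (op (op s t) Y) y); rewrite Hr, !op_assoc, HXst; apply Hl.
Qed.
End Cancellative.

Section Ore.
Variables (M : Type) (op : M -> M -> M).
Hypothesis op_assoc : associative op.
Hypothesis op_cancel : cancellative op.
Hypothesis right_reversible : forall a b : M, exists x y, op a x = op b y.
Variable s0 : M.

Let lc : forall a x y, op a x = op a y -> x = y := proj1 op_cancel.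
Let rc : forall a x y, op x a = op y a -> x = y := proj2 op_cancel.

(* The pairs [(x, y)] with [x y^-1 = a b^-1] in the group of right fractions. *)
Definition frac (a b : M) : M -> M -> Prop :=
  fun x y => exists u v, op x u = op a v /\ op y u = op b v.

Lemma frac_refl a b : frac a b a b.
Proof. exists s0, s0; auto. Qed.

Lemma frac_sym a b x y : frac a b x y -> frac x y a b.
Proof. intros [u [v [H1 H2]]]; exists v, u; auto. Qed.

Lemma frac_trans a b c d x y : frac c d a b -> frac x y c d -> frac x y a b.
Proof.
  intros [u [v [H1 H2]]] [u' [v' [H3 H4]]].
  destruct (right_reversible v u') as [p [q Hpq]].
  exists (op u p), (op v' q); split.
  - rewrite op_assoc, H1, <- op_assoc, Hpq, op_assoc, H3, op_assoc; reflexivity.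
  - rewrite op_assoc, H2, <- op_assoc, Hpq, op_assoc, H4, op_assoc; reflexivity.
Qed.

Lemma frac_eq a b x y : frac a b x y -> frac a b = frac x y.
Proof.
  intro H; apply functional_extensionality; intro p.
  apply functional_extensionality; intro q.
  apply propositional_extensionality; split; intro H'.
  - eapply frac_trans; [exact H'|apply frac_sym, H].
  - eapply frac_trans; [exact H'|exact H].
Qed.

Lemma frac_scale a b t : frac (op a t) (op b t) = frac a b.
Proof. symmetry; apply frac_eq; exists t, (op t t); rewrite !op_assoc; auto. Qed.

Lemma frac_diag a : frac a a = frac s0 s0.
Proof.
  symmetry; apply frac_eq; destruct (right_reversible a s0) as [x [y H]].
  exists x, y; auto.
Qed.

(* Defined without choosing representatives; [frac_mul_frac] computes it. *)
Definition frac_mul (R1 R2 : M -> M -> Prop) : M -> M -> Prop :=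
  fun p q => exists s z, R1 (op p s) z /\ R2 z (op q s).

Definition frac_inv (R : M -> M -> Prop) : M -> M -> Prop := fun x y => R y x.

Lemma frac_mul_frac a b c d X Y : op b X = op c Y ->
  frac_mul (frac a b) (frac c d) = frac (op a X) (op d Y).
Proof.
  intro HXY; apply functional_extensionality; intro p.
  apply functional_extensionality; intro q.
  apply propositional_extensionality; split.
  - intros [s [z [[u1 [v1 [H1 H2]]] [u2 [v2 [H3 H4]]]]]].
    destruct (right_reversible u1 u2) as [m [n Hmn]].
    assert (Hbc : op b (op v1 m) = op c (op v2 n)).
    { rewrite op_assoc, <- H2, <- op_assoc, Hmn, op_assoc, H3, op_assoc; reflexivity. }
    destruct (right_reversible X (op v1 m)) as [al [be Hab]].
    assert (HY : op Y al = op (op v2 n) be).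
    { apply (lc (a := c)).
      transitivity (op (op b X) al); [rewrite op_assoc, HXY; reflexivity|].
      rewrite <- (op_assoc b X al), Hab, (op_assoc b (op v1 m) be), Hbc, <- op_assoc.
      reflexivity. }
    exists (op s (op u1 (op m be))), al; split.
    + rewrite <- (op_assoc a X), Hab, !op_assoc, H1, ?op_assoc; reflexivity.
    + rewrite <- (op_assoc d Y), HY, !op_assoc.
      rewrite <- (op_assoc (op q s) u1 m), Hmn, !op_assoc, H4, ?op_assoc; reflexivity.
  - intros [u [v [H1 H2]]].
    exists u, (op (op b X) v); split.
    + exists u, (op (op X v) u); split; [rewrite H1, ?op_assoc|rewrite !op_assoc]; reflexivity.
    + exists u, (op (op Y v) u); split; [rewrite HXY, ?op_assoc|rewrite H2, ?op_assoc]; reflexivity.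
Qed.

Lemma frac_inv_frac a b : frac_inv (frac a b) = frac b a.
Proof.
  apply functional_extensionality; intro p.
  apply functional_extensionality; intro q.
  apply propositional_extensionality; split; intros [u [v [H1 H2]]]; exists u, v; auto.
Qed.

Definition fractions := {R : M -> M -> Prop | exists a b, R = frac a b}.

Lemma fractions_eq (g h : fractions) : proj1_sig g = proj1_sig h -> g = h.
Proof.
  destruct g as [g pg], h as [h ph]; simpl; intros ->.
  f_equal; apply proof_irrelevance.
Qed.

Definition fractions_mul (g h : fractions) : fractions.
Proof.
  exists (frac_mul (proj1_sig g) (proj1_sig h)).
  destruct g as [g [a [b ->]]], h as [h [c [d ->]]]; simpl.
  destruct (right_reversible b c) as [x [y H]].
  exists (op a x), (op d y); apply frac_mul_frac, H.
Defined.

Definition fractions_one : fractions :=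
  exist _ (frac s0 s0) (ex_intro _ s0 (ex_intro _ s0 eq_refl)).

Definition fractions_inv (g : fractions) : fractions.
Proof.
  exists (frac_inv (proj1_sig g)).
  destruct g as [g [a [b ->]]]; exists b, a; apply frac_inv_frac.
Defined.

Lemma fractions_group : is_group fractions_mul fractions_one fractions_inv.
Proof.
  split; [|split].
  - intros [g [a [b Eg]]] [h [c [d Eh]]] [k [e [f Ek]]]; apply fractions_eq; simpl; subst.
    destruct (right_reversible b c) as [x [y H1]].
    destruct (right_reversible (op d y) e) as [x' [y' H2]].
    rewrite (frac_mul_frac a d H1), (frac_mul_frac (op a x) f H2).
    assert (H3 : op d (op y x') = op e y') by (rewrite op_assoc; auto).
    rewrite (frac_mul_frac c f H3).
    assert (H4 : op b (op (op x x') s0) = op (op c (op y x')) s0) by (rewrite !op_assoc, H1; auto).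
    rewrite (frac_mul_frac a (op f y') H4).
    rewrite !op_assoc, frac_scale; reflexivity.
  - intros [g [a [b Eg]]]; split; apply fractions_eq; simpl; subst.
    + rewrite <- (frac_diag a), (frac_mul_frac a b (eq_refl (op a s0))); apply frac_scale.
    + rewrite <- (frac_diag b), (frac_mul_frac a b (eq_refl (op b s0))); apply frac_scale.
  - intros [g [a [b Eg]]]; split; apply fractions_eq; simpl; subst; rewrite frac_inv_frac.
    + rewrite (frac_mul_frac b b (eq_refl (op a s0))), frac_scale; apply frac_diag.
    + rewrite (frac_mul_frac a a (eq_refl (op b s0))), frac_scale; apply frac_diag.
Qed.

Definition to_fraction (s : M) : fractions :=
  exist _ (frac (op s s0) s0) (ex_intro _ _ (ex_intro _ _ eq_refl)).

Lemma to_fraction_inj x y : to_fraction x = to_fraction y -> x = y.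
Proof.
  intro E; apply (f_equal (@proj1_sig _ _)) in E; simpl in E.
  assert (H : frac (op y s0) s0 (op x s0) s0) by (rewrite <- E; apply frac_refl).
  destruct H as [u [v [H1 H2]]]; apply lc in H2; subst v.
  apply rc, rc in H1; exact H1.
Qed.

Lemma to_fraction_mul x y : to_fraction (op x y) = fractions_mul (to_fraction x) (to_fraction y).
Proof.
  apply fractions_eq; simpl.
  destruct (right_reversible s0 (op y s0)) as [X [Y H]].
  rewrite (frac_mul_frac (op x s0) s0 H).
  rewrite <- (op_assoc x s0 X), H, !op_assoc, frac_scale; reflexivity.
Qed.

Theorem ore_embeds_in_group : embeds_in_group op.
Proof.
  exists fractions, fractions_mul, fractions_one, fractions_inv; split; [exact fractions_group|].
  exists to_fraction; split; [exact to_fraction_inj|exact to_fraction_mul].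
Qed.
End Ore.

Lemma disjoint_cones_of_not_embeds (M : Type) (op : M -> M -> M) :
  associative op -> cancellative op -> ~ embeds_in_group op ->
  exists a b, forall x y, op a x <> op b y.
Proof.
  intros Hassoc Hcanc Hnemb; apply NNPP; intro Hno; apply Hnemb.
  destruct (classic (exists s : M, True)) as [[s0 _]|Hempty].
  - apply (ore_embeds_in_group Hassoc Hcanc); [|exact s0].
    intros a b; apply NNPP; intro H; apply Hno; exists a, b; intros x y E; apply H; eauto.
  - exists unit, (fun _ _ => tt), tt, (fun _ => tt); split.
    + split; [intros [] [] []; reflexivity|split; intros []; auto].
    + exists (fun _ => tt); split; [intros x; exfalso; apply Hempty; eauto|reflexivity].
Qed.

(** * Rays in the Cayley graph *)

Lemma firstn_S_nth (X : Type) (w : list X) j d : j < length w ->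
  firstn (S j) w = firstn j w ++ [nth j w d].
Proof.
  revert j; induction w as [|a w IH]; intros [|j] Hj; simpl in *; try lia; [reflexivity|].
  f_equal; apply IH; lia.
Qed.

Section CayleyCones.
Variables (M : Type) (op : M -> M -> M) (A : list M).
Hypothesis op_assoc : associative op.

Lemma walk_stays_in_cone (Q x : M) l y : walk (cayley_edge op A) x l y ->
  (exists s, x = op Q s) -> exists s, y = op Q s.
Proof.
  revert x; induction l as [|z l IH]; intros x Hw [s Hs].
  - destruct Hw as [_ <-]; exists s; exact Hs.
  - apply walk_uncons in Hw as [[a [_ ->]] Hw]; apply (IH _ Hw).
    exists (op s a); rewrite Hs, op_assoc; reflexivity.
Qed.

Lemma not_preceq_of_disjoint_cones (X Y : M -> Prop) (L : list M) (P Q : M) :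
  (forall s t, op P s <> op Q t) ->
  (forall x, X x -> ~ In x L -> exists s, x = op P s) ->
  (forall y, Y y -> ~ In y L -> exists s, y = op Q s) ->
  ~ preceq (cayley_edge op A) X Y.
Proof.
  intros HPQ HX HY [Ps [HPs Hdisj]].
  destruct (disjoint_paths_avoid Hdisj L) as [n Hn].
  destruct (path_from_to_inv (HPs n)) as [x [l [y [E [Hx [Hy [Hw _]]]]]]]; rewrite E in Hn.
  destruct (walk_stays_in_cone Hw (HX x Hx (Hn x (or_introl eq_refl)))) as [s Hs].
  destruct (HY y Hy (Hn y (walk_last_In Hw))) as [t Ht].
  apply (HPQ s t); congruence.
Qed.
End CayleyCones.

Section Spelling.
Variables (M : Type) (op : M -> M -> M) (A : list M) (x0 : M).
Hypothesis op_assoc : associative op.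
Hypothesis op_cancel : cancellative op.
Variables (word : bool -> list M) (X : bool -> M).
Hypothesis word_in_A : forall b, incl (word b) A.
Hypothesis word_value : forall b y, fold_left op (word b) y = op y (X b).
Hypothesis word_length : length (word false) = length (word true).
Hypothesis word_nonempty : word true <> [].
Hypothesis disjoint_cones : forall s t, op (X true) s <> op (X false) t.

Local Notation block := (length (word true)).

Let block_pos : 0 < block.
Proof. destruct (word true); [contradiction|simpl; lia]. Qed.

Let word_block b : length (word b) = block.
Proof. destruct b; [reflexivity|exact word_length]. Qed.

Definition letter (c : nat -> bool) (n : nat) : M :=
  nth (n mod block) (word (c (n / block))) x0.

Fixpoint spell (c : nat -> bool) (n : nat) : M :=
  match n with 0 => x0 | S n => op (spell c n) (letter c n) end.

Lemma spell_edge c n : cayley_edge op A (spell c n) (spell c (S n)).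
Proof.
  exists (letter c n); split; [|reflexivity].
  apply (word_in_A (c (n / block))), nth_In; rewrite (word_block (c (n / block))).
  apply Nat.mod_upper_bound; pose proof block_pos; lia.
Qed.

Lemma spell_block_prefix c k j : j <= block ->
  spell c (k * block + j) = fold_left op (firstn j (word (c k))) (spell c (k * block)).
Proof.
  induction j as [|j IH]; intro Hj; [rewrite Nat.add_0_r; reflexivity|].
  rewrite Nat.add_succ_r; cbn [spell]; rewrite IH by lia; unfold letter.
  rewrite <- (Nat.div_unique (k * block + j) block k j),
          <- (Nat.mod_unique (k * block + j) block k j) by lia.
  rewrite (firstn_S_nth (word (c k)) x0) by (rewrite (word_block (c k)); lia).
  rewrite fold_left_app; reflexivity.
Qed.

Lemma spell_block c k : spell c (S k * block) = op (spell c (k * block)) (X (c k)).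
Proof.
  replace (S k * block) with (k * block + block) by lia.
  rewrite spell_block_prefix, <- (word_block (c k)), firstn_all by lia; apply word_value.
Qed.

Lemma spell_extends c m n : m < n -> exists s, spell c n = op (spell c m) s.
Proof.
  induction n as [|n IH]; intro Hmn; [lia|].
  destruct (Nat.eq_dec m n) as [->|Hne]; [exists (letter c n); reflexivity|].
  destruct IH as [s Hs]; [lia|]; exists (op s (letter c n)).
  simpl; rewrite Hs, op_assoc; reflexivity.
Qed.

Lemma spell_cone c k m : S k * block < m ->
  exists s, spell c m = op (op (spell c (k * block)) (X (c k))) s.
Proof.
  intro Hm; destruct (spell_extends c Hm) as [s Hs]; exists s; rewrite Hs, spell_block; reflexivity.
Qed.

Lemma spell_agree c c' k : (forall i, i < k -> c i = c' i) ->
  spell c (k * block) = spell c' (k * block).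
Proof.
  intro Hc; assert (H : forall n, n <= k * block -> spell c n = spell c' n).
  { induction n as [|n IH]; intro Hn; [reflexivity|].
    simpl; rewrite IH by lia; unfold letter; rewrite Hc; [reflexivity|].
    apply Nat.Div0.div_lt_upper_bound; pose proof block_pos; lia. }
  apply H; lia.
Qed.

Lemma X_cones_disjoint b b' : b <> b' -> forall s t, op (X b) s <> op (X b') t.
Proof.
  destruct b, b'; intros Hb s t E; try (now apply Hb); [|symmetry in E]; exact (disjoint_cones E).
Qed.

(* From block [n+2] on, the walk lies in a cone [spell c n * t * X b * M], from which
   it cannot return to [spell c n]. *)
Lemma spell_visits_finite c n : exists B, forall m, spell c m = spell c n -> m < B.
Proof.
  pose proof block_pos.
  exists (S (S (S n)) * block); intros m E; apply Nat.nle_gt; intro Hm.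
  destruct (spell_cone c (S n) (m := m)) as [s Hs]; [nia|].
  destruct (spell_extends c (m := n) (n := S n * block)) as [t Ht]; [simpl; nia|].
  assert (Hb := X_cones_disjoint (b := c (S n)) (b' := negb (c (S n)))
                 (fun E => Bool.no_fixpoint_negb _ (eq_sym E))).
  apply (disjoint_cones_no_return op_assoc op_cancel _ _ Hb (x := spell c n) t s).
  rewrite <- E at 2; rewrite Hs, Ht, !op_assoc; reflexivity.
Qed.

Lemma spell_ray c : exists r, is_ray (cayley_edge op A) r /\ forall k, exists n, r k = spell c n.
Proof. apply ray_of_walk; [apply spell_edge|apply spell_visits_finite]. Qed.

Lemma spell_rays_separated c c' r r' : c <> c' ->
  (forall k, exists n, r k = spell c n) -> (forall k, exists n, r' k = spell c' n) ->
  ~ preceq (cayley_edge op A) (image r) (image r').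
Proof.
  intros Hcc Hr Hr'.
  assert (Hdiff : exists k, c k <> c' k).
  { apply NNPP; intro Hn; apply Hcc, functional_extensionality; intro k.
    apply NNPP; intro Hk; apply Hn; eauto. }
  destruct (dec_inh_nat_subset_has_unique_least_element (fun k => c k <> c' k)
              (fun k => classic _) Hdiff) as [k [[Hk Hmin] _]].
  assert (Hagree : forall i, i < k -> c i = c' i).
  { intros i Hi; apply NNPP; intro H; specialize (Hmin i H); lia. }
  set (B := S (S k * block)).
  set (base := spell c (k * block)).
  (* past the first [B] steps both rays lie in cones [base * X b * M] with different [b] *)
  apply (not_preceq_of_disjoint_cones op_assoc
           (map (spell c) (seq 0 B) ++ map (spell c') (seq 0 B))
           (op base (X (c k))) (op base (X (c' k)))).
  - intros s t E; rewrite <- !op_assoc in E; apply (proj1 op_cancel) in E.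
    exact (X_cones_disjoint Hk E).
  - intros x [i <-] Hx; destruct (Hr i) as [m Hm]; rewrite Hm in Hx |- *.
    apply spell_cone; apply Nat.nle_gt; intro Hm'; apply Hx, in_or_app; left.
    apply in_map, in_seq; lia.
  - intros y [i <-] Hy; destruct (Hr' i) as [m Hm]; rewrite Hm in Hy |- *.
    unfold base; rewrite (spell_agree c c' Hagree); apply spell_cone; apply Nat.nle_gt; intro Hm'.
    apply Hy, in_or_app; right; apply in_map, in_seq; lia.
Qed.
End Spelling.

Theorem mainTheorem14 (S : Type) (op : S -> S -> S)
  (Hassoc : associative op) (Hcanc : cancellative op)
  (Hfg : finitely_generated op) (Hnemb : ~ embeds_in_group op)
  (A : list S) (HA : generates op A) :
  ends_card_continuum (cayley_edge op A).
Proof.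
  destruct (disjoint_cones_of_not_embeds Hassoc Hcanc Hnemb) as [a [b Hab]].
  destruct (generated_word Hassoc (HA a)) as [wa [Hwa [HwaA Ea]]].
  destruct (generated_word Hassoc (HA b)) as [wb [_ [HwbA Eb]]].
  set (word := fun t : bool => if t then wa ++ wb else wb ++ wa).
  set (X := fun t : bool => if t then op a b else op b a).
  assert (Hword_A : forall t, incl (word t) A) by (intros []; apply incl_app; assumption).
  assert (Hword_value : forall t y, fold_left op (word t) y = op y (X t)).
  { intros [] y; simpl; rewrite fold_left_app, Ea, Eb; symmetry; apply Hassoc. }
  assert (Hlength : length (word false) = length (word true)) by (simpl; rewrite !length_app; lia).
  assert (Hnonempty : word true <> []) by (intro E; apply app_eq_nil in E; tauto).
  assert (Hdisjoint : forall s t, op (X true) s <> op (X false) t).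
  { intros s t; simpl; rewrite <- !Hassoc; apply Hab. }
  destruct (generated_countable Hassoc (proj1 Hcanc) HA) as [code Hcode].
  destruct (choice _ (spell_ray a Hassoc Hcanc word X Hword_A Hword_value Hlength Hnonempty
                                Hdisjoint)) as [ray Hray].
  apply (ends_card_continuum_of_rays code ray Hcode); [intro c; apply Hray|].
  intros c c' Hcc; exact (spell_rays_separated a Hassoc Hcanc word X Hword_value Hlength Hnonempty
                            Hdisjoint Hcc (proj2 (Hray c)) (proj2 (Hray c'))).
Qed.
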